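(* Assume Case 3 holds. Let $(C,D)=(n_2,m_2)$ and for $n\ge1$ put $$(C_n,D_n)=(\gamma_n-(\gamma-C)d^{n-1},\ Dd^{n-1}),\qquad (C_n^*,D_n^* )=\big((\delta^{n-1}+\delta^{n-2}D+\cdots+\delta D^{n-2}+D^{n-1})C,\ D^n\big).$$ (i) If $\delta>T_1$, then for every $n\ge1$, $(C_n,D_n)$ is the vertex of $N(Q^n)$ immediately following $(\gamma_n,d^n)$ (in order of increasing $x$-coordinate), the segment joining them has slope $-l_2^{-1}$, and $\delta^n$ is strictly bigger than the $y$-intercept of the line through $(\gamma_n,d^n)$ and $(C_n,D_n)$. (ii) If $\delta=T_1$ and $m_2>0$, then for every $n\ge1$, $(C_n^*,D_n^* )$ is the vertex of $N(Q^n)$ immediately following $(\gamma_n,d^n)$, the segment joining them has slope $-l_2^{-1}$, and $\delta^n$ equals the $y$-intercept of the line through $(\gamma_n,d^n)$ and $(C_n^*,D_n^* )$.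
   Context: Let $f(z,w)=(p(z),q(z,w))$ be a holomorphic skew product germ at the origin of $\mathbb{C}^2$ with $f(0,0)=(0,0)$, where $p(z)=a_\delta z^\delta+O(z^{\delta+1})$ with $a_\delta\neq0$ and integer $\delta\ge1$, and $q(z,w)=\sum_{i+j\ge1}b_{ij}z^iw^j$ is not identically zero. For $n\ge1$ write $f^n=(p^n,Q^n)$. The Newton polygon $N(g)$ of a nonzero germ $g=\sum g_{ij}z^iw^j$ is the convex hull of $\bigcup_{g_{ij}\neq0}\{(x,y):x\ge i,\ y\ge j\}$. Let $(n_1,m_1),\dots,(n_s,m_s)$ be the vertices of $N(q)$ with $n_1<\cdots<n_s$, $m_1>\cdots>m_s$; for $1\le k\le s-1$ let $T_k$ be the $y$-intercept of the line through $(n_k,m_k)$ and $(n_{k+1},m_{k+1})$. Case 3 means: $s>1$ and $T_1\le\delta$; set $(\gamma,d)=(n_1,m_1)$ and $l_2=\frac{n_2-n_1}{m_1-m_2}$. Define $\gamma_n=\gamma(\delta^{n-1}+\delta^{n-2}d+\cdots+d^{n-1})$. *)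

From HB Require Import structures.
From mathcomp Require Import all_boot all_order all_algebra.
From mathcomp Require Import reals.
From mathcomp Require Import complex.
Set Implicit Arguments. Unset Strict Implicit. Unset Printing Implicit Defensive.
Import Order.TTheory GRing.Theory Num.Theory.
Local Open Scope ring_scope.

(** Power series (germs at 0) are represented by their coefficient arrays:
    a one-variable series  p = sum_i p i z^i  is [nat -> K];
    a two-variable series  g = sum_{i,j} g i j z^i w^j  is [nat -> nat -> K]. *)

Section Series.
Variable K : comNzRingType.

(** Truncation to total degree <= N, as a bivariate polynomial:
    outer variable is w, inner variable is z. *)
Definition trunc1 (N : nat) (p : nat -> K) : {poly K} :=
  \poly_(i < N.+1) p i.

Definition trunc2 (N : nat) (g : nat -> nat -> K) : {poly {poly K}} :=
  \poly_(j < N.+1) (\poly_(i < N.+1) (if (i + j <= N)%N then g i j else 0)).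

Definition coef2 (P : {poly {poly K}}) (i j : nat) : K := (P`_j)`_i.

(** substitution (z, w) := (a(z), b(z, w)) in a bivariate polynomial q *)
Definition subst2 (q : {poly {poly K}}) (a : {poly K}) (b : {poly {poly K}})
  : {poly {poly K}} :=
  (map_poly polyC (map_poly (fun c : {poly K} => c \Po a) q)).[b].

(** polynomial iterates of the truncations:
    pit N n = (trunc p)^{o n}, Qit N n = second component of (trunc f)^{o n}
    (with f^1 = (p, q), f^(n+1) = f o f^n = (p(p^n), q(p^n, Q^n))). *)
Fixpoint pit (N : nat) (p : nat -> K) (n : nat) : {poly K} :=
  match n with
  | 0 => 'X
  | n'.+1 => trunc1 N p \Po pit N p n'
  end.

Fixpoint Qit (N : nat) (p : nat -> K) (q : nat -> nat -> K) (n : nat)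
  : {poly {poly K}} :=
  match n with
  | 0 => 'X
  | n'.+1 => subst2 (trunc2 N q) (pit N p n') (Qit N p q n')
  end.

(** Coefficients of the formal power series Q^n, where f^n = (p^n, Q^n).
    Since p(0) = 0 and q(0,0) = 0, the coefficient of z^i w^j of the
    composite only depends on the coefficients of total degree <= i + j,
    so it is computed exactly from the truncations at degree N = i + j. *)
Definition Qn (p : nat -> K) (q : nat -> nat -> K) (n : nat) : nat -> nat -> K :=
  fun i j => coef2 (Qit (i + j) p q n) i j.

End Series.

Section Newton.
Variable R : realType.
Variable K : comNzRingType.

Definition in_quadrants (g : nat -> nat -> K) (v : R * R) : Prop :=
  exists i j : nat, g i j != 0 /\ (i%:R <= v.1) /\ (j%:R <= v.2).

Definition newton_polygon (g : nat -> nat -> K) (v : R * R) : Prop :=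
  exists (m : nat) (lam : 'I_m -> R) (pts : 'I_m -> R * R),
    (forall k, 0 <= lam k) /\ (\sum_(k < m) lam k = 1) /\
    (forall k, in_quadrants g (pts k)) /\
    v.1 = \sum_(k < m) lam k * (pts k).1 /\ v.2 = \sum_(k < m) lam k * (pts k).2.

Definition is_vertex (g : nat -> nat -> K) (v : R * R) : Prop :=
  newton_polygon g v /\
  forall (a b : R * R) (t : R), newton_polygon g a -> newton_polygon g b ->
    0 < t < 1 -> v = (t * a.1 + (1 - t) * b.1, t * a.2 + (1 - t) * b.2) ->
    a = b.

Definition next_vertex (g : nat -> nat -> K) (v w : R * R) : Prop :=
  is_vertex g v /\ is_vertex g w /\ v.1 < w.1 /\
  forall u, is_vertex g u -> ~ (v.1 < u.1 /\ u.1 < w.1).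

Definition y_intercept (x1 y1 x2 y2 : R) : R :=
  y1 - x1 * ((y2 - y1) / (x2 - x1)).

Definition slope (x1 y1 x2 y2 : R) : R := (y2 - y1) / (x2 - x1).

End Newton.

(** holomorphy (convergence near 0) of a germ given by its coefficients *)
Definition convergent1 (R : realType) (p : nat -> R[i]) : Prop :=
  exists (M r : R), 0 < r /\ forall i, `|p i| <= (M / r ^+ i)%:C%C.

Definition convergent2 (R : realType) (g : nat -> nat -> R[i]) : Prop :=
  exists (M r : R), 0 < r /\ forall i j, `|g i j| <= (M / r ^+ (i + j))%:C%C.

Definition gamma_n (gamma delta d n : nat) : nat :=
  (gamma * \sum_(k < n) delta ^ (n.-1 - k) * d ^ k)%N.

From Pilot Require Import Defs.
From HB Require Import structures.
From mathcomp Require Import all_boot all_order all_algebra.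
From mathcomp Require Import reals complex.
From mathcomp Require Import zify.
From mathcomp.algebra_tactics Require Import ring lra.
From Stdlib Require Import Classical.
Import Order.TTheory GRing.Theory Num.Theory.
Local Open Scope ring_scope.
Set Implicit Arguments. Unset Strict Implicit. Unset Printing Implicit Defensive.

(** Give [z] the weight [al = d - D] and [w] the weight [be = C - gam]: the first
    edge of [N(q)] lies on the line [al i + be j = cc] with [cc = al gam + be d],
    and [N(q)] lies above it.  Since [Q^(n+1) = q(p^n, Q^n)] and the leading term
    of [p^n] is [a z^(delta^n)], the weighted-homogeneous leading part of [Q^n] is
    computed from those of [q], [p^n] and [Q^(n-1)].  If [T_1 < delta], the
    substitution [z := a z^(delta^n)] tilts the weights so that only the corner
    monomial [q_(gam,d) z^gam w^d] survives; if [T_1 = delta], the weights stay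
    proportional to [(al, be)] and the whole first edge of [q] contributes.  In
    both cases the [w]-degree and [w]-valuation of the leading part are the two
    endpoints of an edge of [N(Q^n)] of slope [-al/be]: its first two vertices. *)

Section Coef2.
Variable K : comNzRingType.
Implicit Types (P Q : {poly {poly K}}).

Lemma coef2D P Q i j : coef2 (P + Q) i j = coef2 P i j + coef2 Q i j.
Proof. by rewrite /coef2 !coefD. Qed.

Lemma coef2N P i j : coef2 (- P) i j = - coef2 P i j.
Proof. by rewrite /coef2 !coefN. Qed.

Lemma coef2B P Q i j : coef2 (P - Q) i j = coef2 P i j - coef2 Q i j.
Proof. by rewrite coef2D coef2N. Qed.

Lemma coef20 i j : coef2 (0 : {poly {poly K}}) i j = 0.
Proof. by rewrite /coef2 !coef0. Qed.

Lemma coef2_polyC (t : {poly K}) i j :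
  coef2 (t%:P : {poly {poly K}}) i j = if j == 0%N then t`_i else 0.
Proof. by rewrite /coef2 coefC; case: ifP; rewrite ?coef0. Qed.

Lemma coef2C (c : K) i j :
  coef2 (c%:P%:P : {poly {poly K}}) i j = if (i == 0%N) && (j == 0%N) then c else 0.
Proof. by rewrite coef2_polyC coefC andbC; case: ifP. Qed.

Lemma coef2X i j :
  coef2 ('X : {poly {poly K}}) i j = if (i == 0%N) && (j == 1%N) then 1 else 0.
Proof.
rewrite /coef2 coefX; case: (j =P 1%N) => _ /=; rewrite ?coef1 ?coef0 ?andbT ?andbF //.
by case: eqP.
Qed.

Lemma coef2M P Q i j : coef2 (P * Q) i j =
  \sum_(k < j.+1) \sum_(l < i.+1) coef2 P l k * coef2 Q (i - l) (j - k).
Proof. by rewrite /coef2 coefM coef_sum; apply: eq_bigr => k _; rewrite coefM. Qed.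

Lemma sum_neq0_exists (I : finType) (F : I -> K) :
  \sum_k F k != 0 -> exists k, F k != 0.
Proof.
move=> Hs; apply/existsP; apply: contraNT Hs => /existsPn H.
by rewrite big1 // => k _; apply/eqP/negbNE/H.
Qed.

Lemma coef2M_neq0 P Q i j : coef2 (P * Q) i j != 0 ->
  exists k l, [/\ (k <= j)%N, (l <= i)%N, coef2 P l k != 0 & coef2 Q (i - l) (j - k) != 0].
Proof.
rewrite coef2M => /sum_neq0_exists [k /sum_neq0_exists [l Hkl]].
exists k, l; split; [by rewrite -ltnS | by rewrite -ltnS | |].
  by apply: contraNneq Hkl => ->; rewrite mul0r.
by apply: contraNneq Hkl => ->; rewrite mulr0.
Qed.

End Coef2.

Section Weights.
Variable K : comNzRingType.
Implicit Types (P Q E G : {poly {poly K}}).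

Definition wt_ge a b c P := forall i j, coef2 P i j != 0 -> (c <= a * i + b * j)%N.
Definition wt_hom a b c P := forall i j, coef2 P i j != 0 -> (a * i + b * j)%N = c.

(* [E] is the weight-[c] part of [P] when [E] is moreover [wt_hom a b c]. *)
Definition wt_approx a b c P E := wt_ge a b c.+1 (P - E).

Lemma wt_ge0 a b c : wt_ge a b c 0.
Proof. by move=> i j; rewrite coef20 eqxx. Qed.

Lemma wt_ge_le a b c c' P : (c' <= c)%N -> wt_ge a b c P -> wt_ge a b c' P.
Proof. by move=> Hc HP i j /HP; apply: leq_trans. Qed.

Lemma wt_geD a b c P Q : wt_ge a b c P -> wt_ge a b c Q -> wt_ge a b c (P + Q).
Proof.
move=> HP HQ i j; rewrite coef2D.
by case: (eqVneq (coef2 P i j) 0) => [->|/HP //]; rewrite add0r => /HQ.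
Qed.

Lemma wt_ge_sum a b c (I : Type) (r : seq I) (Pr : pred I) (F : I -> {poly {poly K}}) :
  (forall k, Pr k -> wt_ge a b c (F k)) -> wt_ge a b c (\sum_(k <- r | Pr k) F k).
Proof. by move=> H; elim/big_ind: _ => //; [exact: wt_ge0 | exact: wt_geD]. Qed.

Lemma wt_geM a b c1 c2 P Q :
  wt_ge a b c1 P -> wt_ge a b c2 Q -> wt_ge a b (c1 + c2) (P * Q).
Proof.
move=> HP HQ i j /coef2M_neq0 [k [l [Hk Hl /HP H1 /HQ H2]]].
have -> : (a * i + b * j = (a * l + b * k) + (a * (i - l) + b * (j - k)))%N.
  by rewrite !mulnBr; have := leq_mul (leqnn a) Hl; have := leq_mul (leqnn b) Hk; lia.
exact: leq_add.
Qed.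

Lemma wt_geX a b c P n : wt_ge a b c P -> wt_ge a b (n * c) (P ^+ n).
Proof.
by move=> HP; elim: n => [//|n IH]; rewrite exprS mulSn; apply: wt_geM.
Qed.

Lemma wt_hom0 a b c : wt_hom a b c (0 : {poly {poly K}}).
Proof. by move=> i j; rewrite coef20 eqxx. Qed.

Lemma wt_homD a b c P Q : wt_hom a b c P -> wt_hom a b c Q -> wt_hom a b c (P + Q).
Proof.
move=> HP HQ i j; rewrite coef2D.
by case: (eqVneq (coef2 P i j) 0) => [->|/HP //]; rewrite add0r => /HQ.
Qed.

Lemma wt_hom_sum a b c (I : Type) (r : seq I) (Pr : pred I) (F : I -> {poly {poly K}}) :
  (forall k, Pr k -> wt_hom a b c (F k)) -> wt_hom a b c (\sum_(k <- r | Pr k) F k).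
Proof.
by move=> H; elim/big_ind: _ => //; [exact: wt_hom0 | exact: wt_homD].
Qed.

Lemma wt_homC a b (c : K) : wt_hom a b 0 (c%:P%:P).
Proof.
move=> i j; rewrite coef2C; case: (i =P 0%N) => [->|_] /=; last by rewrite eqxx.
by case: (j =P 0%N) => [->|_]; rewrite ?eqxx // !muln0.
Qed.

Lemma wt_homM a b c1 c2 P Q :
  wt_hom a b c1 P -> wt_hom a b c2 Q -> wt_hom a b (c1 + c2) (P * Q).
Proof.
move=> HP HQ i j /coef2M_neq0 [k [l [Hk Hl /HP <- /HQ <-]]].
rewrite !mulnBr; have := leq_mul (leqnn a) Hl; have := leq_mul (leqnn b) Hk; lia.
Qed.

Lemma wt_homX a b c P n : wt_hom a b c P -> wt_hom a b (n * c) (P ^+ n).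
Proof.
move=> HP; elim: n => [|n IH]; first by rewrite expr0 -polyC1 -polyC1; apply: wt_homC.
by rewrite exprS mulSn; apply: wt_homM.
Qed.

Lemma wt_hom_ge a b c P : wt_hom a b c P -> wt_ge a b c P.
Proof. by move=> H i j /H ->. Qed.

Lemma wt_hom_scale a b c V P : wt_hom a b c P -> wt_hom (a * V) (b * V) (c * V) P.
Proof. by move=> H i j /H <-; rewrite mulnDl -!mulnA (mulnC V i) (mulnC V j). Qed.

Lemma wt_ge_scale a b c V P :
  (0 < V)%N -> wt_ge a b c.+1 P -> wt_ge (a * V) (b * V) (c * V).+1 P.
Proof. by move=> HV H i j /H Hk; have := leq_mul Hk (leqnn V); nia. Qed.

Lemma wt_approx_ge a b c P E : wt_approx a b c P E -> wt_ge a b c E -> wt_ge a b c P.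
Proof.
move=> H HE; rewrite -[P](subrK E) addrC.
by apply: wt_geD => //; apply: wt_ge_le H.
Qed.

Lemma wt_approx_coef a b c P E i j :
  wt_approx a b c P E -> (a * i + b * j)%N = c -> coef2 P i j = coef2 E i j.
Proof.
move=> H HL; apply/eqP; rewrite -subr_eq0 -coef2B.
by apply/negP => /negP /H; rewrite HL ltnn.
Qed.

Lemma wt_ge_subM a b c P P' Q Q' :
  wt_ge a b c (P - P') -> wt_ge a b c (Q - Q') -> wt_ge a b c (P * Q - P' * Q').
Proof.
move=> H1 H2; have -> : P * Q - P' * Q' = (P - P') * Q + P' * (Q - Q').
  by rewrite mulrBl mulrBr addrA subrK.
by apply: wt_geD; [rewrite -[c]addn0 | rewrite -[c]add0n]; apply: wt_geM.
Qed.

Lemma wt_ge_subX a b c P P' n : wt_ge a b c (P - P') -> wt_ge a b c (P ^+ n - P' ^+ n).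
Proof.
move=> H; elim: n => [|n IH]; first by rewrite subrr; apply: wt_ge0.
by rewrite !exprS; apply: wt_ge_subM.
Qed.

Lemma wt_approxM a b c1 c2 P E Q G : wt_approx a b c1 P E -> wt_approx a b c2 Q G ->
  wt_ge a b c1 E -> wt_ge a b c2 Q -> wt_approx a b (c1 + c2) (P * Q) (E * G).
Proof.
move=> H1 H2 HE HQ; rewrite /wt_approx.
have -> : P * Q - E * G = (P - E) * Q + E * (Q - G).
  by rewrite mulrBl mulrBr addrA subrK.
by apply: wt_geD; [rewrite -addSn | rewrite -addnS]; apply: wt_geM.
Qed.

Lemma wt_approxX a b c P E n : wt_approx a b c P E -> wt_ge a b c E ->
  wt_approx a b (n * c) (P ^+ n) (E ^+ n).
Proof.
move=> H HE; elim: n => [|n IH]; first by rewrite /wt_approx subrr; apply: wt_ge0.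
rewrite !exprS mulSn; apply: wt_approxM => //.
exact/wt_geX/(wt_approx_ge H HE).
Qed.

Lemma wt_ge_subtrans a b c (X Y Z : {poly {poly K}}) :
  wt_ge a b c (X - Z) -> wt_ge a b c (Z - Y) -> wt_ge a b c (X - Y).
Proof. by move=> H1 H2; rewrite -[X](subrK Z) -addrA; apply: wt_geD. Qed.

End Weights.

Section Substitution.
Variable K : comNzRingType.
Implicit Types (q B E : {poly {poly K}}) (A : {poly K}).

Lemma subst2E q A B : subst2 q A B =
  \sum_(j < size q) \sum_(i < size q`_j) (q`_j`_i)%:P%:P * (A%:P) ^+ i * B ^+ j.
Proof.
rewrite /subst2 (horner_coef_wide _ (n := size q)); last first.
  by rewrite size_map_polyC /map_poly size_poly.
apply: eq_bigr => j _; rewrite coef_map /= coef_map_id0 ?comp_poly0 //.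
rewrite comp_polyE rmorph_sum mulr_suml; apply: eq_bigr => i _.
by rewrite -mul_polyC !rmorphM !rmorphXn.
Qed.

Lemma subst2B q q' A B : subst2 (q - q') A B = subst2 q A B - subst2 q' A B.
Proof.
rewrite /subst2 -hornerN -hornerD -rmorphB; congr (map_poly _ _).[_].
by apply/polyP => k; rewrite coefB !coef_map_id0 ?comp_poly0 // coefB comp_polyB.
Qed.

Lemma polyC_comp_subst2 (t A : {poly K}) B : (t \Po A)%:P = subst2 t%:P A B.
Proof.
rewrite /subst2.
have -> : map_poly (fun c : {poly K} => c \Po A) t%:P = (t \Po A)%:P.
  by apply/polyP => k; rewrite coef_map_id0 ?comp_poly0 // !coefC; case: eqP; rewrite ?comp_poly0.
by rewrite map_polyC hornerC.
Qed.

Lemma wt_ge_subst u v m a b q A B : wt_ge u v m q ->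
  wt_ge a b u (A%:P) -> wt_ge a b v B -> wt_ge a b m (subst2 q A B).
Proof.
move=> Hq HA HB; rewrite subst2E; apply: wt_ge_sum => j _; apply: wt_ge_sum => i _.
have [->|/Hq Hm] := eqVneq (q`_j`_i) 0; first by rewrite !mul0r; apply: wt_ge0.
apply: (wt_ge_le (c := (0 + i * u + j * v)%N)); first by rewrite add0n (mulnC i) (mulnC j).
by apply/wt_geM/wt_geX => //; apply/wt_geM/wt_geX.
Qed.

Lemma wt_ge_subst_sub a b c q A A' B B' :
  wt_ge a b c (A%:P - A'%:P) -> wt_ge a b c (B - B') ->
  wt_ge a b c (subst2 q A B - subst2 q A' B').
Proof.
move=> HA HB; rewrite !subst2E -sumrB; apply: wt_ge_sum => j _.
rewrite -sumrB; apply: wt_ge_sum => i _.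
apply/wt_ge_subM/wt_ge_subX => //.
by apply/wt_ge_subM/wt_ge_subX => //; rewrite subrr; apply: wt_ge0.
Qed.

Lemma wt_hom_subst u v m a b q A E : wt_hom u v m q ->
  wt_hom a b u (A%:P) -> wt_hom a b v E -> wt_hom a b m (subst2 q A E).
Proof.
move=> Hq HA HE; rewrite subst2E; apply: wt_hom_sum => j _; apply: wt_hom_sum => i _.
have [->|/Hq <-] := eqVneq (q`_j`_i) 0.
  by rewrite !mul0r; apply: wt_hom0.
rewrite -[(u * i)%N]add0n (mulnC u) (mulnC v).
by apply/wt_homM/wt_homX => //; apply/wt_homM/wt_homX => //; apply: wt_homC.
Qed.

Lemma wt_approx_subst u v m a b q q0 A A0 B E :
  wt_approx u v m q q0 -> wt_hom u v m q0 ->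
  wt_approx a b u (A%:P) (A0%:P) -> wt_hom a b u (A0%:P) ->
  wt_approx a b v B E -> wt_hom a b v E ->
  wt_approx a b m (subst2 q A B) (subst2 q0 A0 E).
Proof.
move=> Hq Hq0 HA /wt_hom_ge HA0 HB /wt_hom_ge HE.
have HAw := wt_approx_ge HA HA0; have HBw := wt_approx_ge HB HE.
rewrite /wt_approx -[subst2 q A B](subrK (subst2 q0 A B)) -subst2B -addrA.
apply: wt_geD; first exact: (wt_ge_subst Hq).
rewrite !subst2E -sumrB; apply: wt_ge_sum => j _.
rewrite -sumrB; apply: wt_ge_sum => i _.
have [->|/Hq0 Hm] := eqVneq (q0`_j`_i) 0; first by rewrite !mul0r subrr; apply: wt_ge0.
rewrite -!mulrA -mulrBr -[m.+1]add0n; apply: wt_geM; first by [].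
rewrite -Hm mulnC (mulnC v).
by apply: wt_approxM; [exact: wt_approxX | exact: wt_approxX | exact: wt_geX | exact: wt_geX].
Qed.

Lemma wt_ge_polyC_scale a b c (t : {poly K}) :
  (0 < a)%N -> wt_ge 1 1 c (t%:P) -> wt_ge a b (a * c) (t%:P).
Proof.
move=> Ha H i j Hc; have := H i j Hc; move: Hc; rewrite coef2_polyC.
case: (j =P 0%N) => [-> _|_]; last by rewrite eqxx.
by rewrite !muln0 !addn0 !mul1n => Hk; rewrite leq_mul.
Qed.

End Substitution.

Section ValuationDegree.
Variable R : idomainType.
Implicit Types (P Q : {poly R}).

Definition has_val P l := (forall j, (j < l)%N -> P`_j = 0) /\ P`_l != 0.
Definition has_deg P h := size P = h.+1.

Lemma has_val_drop P l : has_val P l -> P = drop_poly l P * 'X^l.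
Proof.
case=> H _; rewrite -{1}(poly_take_drop l P).
suff -> : take_poly l P = 0 by rewrite add0r.
by apply/polyP => k; rewrite coef_take_poly coef0; case: ifP => // /H.
Qed.

Lemma has_valM P Q l1 l2 : has_val P l1 -> has_val Q l2 -> has_val (P * Q) (l1 + l2).
Proof.
move=> HP HQ; rewrite (has_val_drop HP) (has_val_drop HQ) mulrACA -exprD.
split=> [j Hj|]; first by rewrite coefMXn Hj.
rewrite coefMXn ltnn subnn coef0M !coef_drop_poly !add0n.
by rewrite mulf_neq0 //; [case: HP | case: HQ].
Qed.

Lemma has_valX P l n : has_val P l -> has_val (P ^+ n) (l * n).
Proof.
move=> H; elim: n => [|n IH]; last by rewrite exprS mulnS; apply: has_valM.
by rewrite expr0 muln0; split=> //; rewrite coefC eqxx oner_eq0.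
Qed.

Lemma has_deg_neq0 P h : has_deg P h -> P != 0.
Proof. by rewrite /has_deg -size_poly_eq0 => ->. Qed.

Lemma has_deg_lead_coef P h : has_deg P h -> P`_h != 0.
Proof. by move=> H; have := has_deg_neq0 H; rewrite -lead_coef_eq0 /lead_coef H. Qed.

End ValuationDegree.

Section ValuationDegreeSubst.
Variable F : idomainType.
Variables (q : {poly {poly F}}) (A : {poly F}) (E : {poly {poly F}}).
Hypothesis HA : (1 < size A)%N.
Let qA := map_poly (fun c : {poly F} => c \Po A) q.

Lemma has_deg_subst dq h : has_deg q dq -> has_deg E h -> (0 < h)%N ->
  has_deg (subst2 q A E) (dq * h).
Proof.
move=> Hq HE Hh; rewrite /subst2 -/qA -/(qA \Po E).
have HqA : size qA = size q.
  by apply: size_map_poly_id0; rewrite comp_poly_eq0 // lead_coef_eq0 (has_deg_neq0 Hq).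
have := size_comp_poly qA E; rewrite HqA Hq HE /= /has_deg => <-.
by rewrite prednK // lt0n size_poly_eq0 comp_poly_eq0 ?HE // -size_poly_eq0 HqA Hq.
Qed.

(* The higher powers of [E] could cancel the lowest term, unless [E] has
   positive valuation or [q] has no term beyond its valuation. *)
Lemma has_val_subst vq l : has_val q vq -> has_val E l ->
  (0 < l)%N || (size q <= vq.+1)%N -> has_val (subst2 q A E) (l * vq).
Proof.
move=> Hq HE Hcase; rewrite /subst2 -/qA -/(qA \Po E).
have HqAv : has_val qA vq.
  split=> [j Hj|]; rewrite /qA coef_map_id0 ?comp_poly0 //.
    by case: Hq => H _; rewrite H // comp_poly0.
  by rewrite comp_poly_eq0 //; case: Hq.
rewrite (has_val_drop HqAv) comp_polyM comp_Xn_poly mulnC -[(vq * l)%N]add0n.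
apply: has_valM; last by rewrite mulnC; apply: has_valX.
set X' := drop_poly vq qA.
have HX'0 : X'`_0 != 0 by rewrite /X' coef_drop_poly add0n; case: HqAv.
split=> //; case/orP: Hcase => [Hl|Hs].
  rewrite -horner_coef0 horner_comp horner_coef0.
  by case: HE => H _; rewrite H // horner_coef0.
have HsX : (size X' <= 1)%N.
  rewrite /X' size_drop_poly leq_subLR addn1; apply: leq_trans Hs.
  by rewrite /qA /map_poly size_poly.
by rewrite (size1_polyC HsX) comp_polyC coefC.
Qed.

End ValuationDegreeSubst.

Section Truncation.
Variable K : comNzRingType.
Variables (p : nat -> K) (q : nat -> nat -> K).
Hypothesis p0 : p 0%N = 0.
Hypothesis q00 : q 0%N 0%N = 0.

Lemma coef_trunc1 N i : (Defs.trunc1 N p)`_i = if (i <= N)%N then p i else 0.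
Proof. by rewrite /Defs.trunc1 coef_poly ltnS. Qed.

Lemma coef2_trunc2 N (g : nat -> nat -> K) i j :
  coef2 (trunc2 N g) i j = if (i + j <= N)%N then g i j else 0.
Proof.
rewrite /coef2 /trunc2 coef_poly ltnS.
case: (leqP (i + j) N) => H.
  have Hj : (j <= N)%N by apply: leq_trans H; apply: leq_addl.
  have Hi : (i <= N)%N by apply: leq_trans H; apply: leq_addr.
  by rewrite Hj coef_poly ltnS Hi H.
case: ifP => _; last by rewrite coef0.
by rewrite coef_poly; case: ifP => _ //; rewrite leqNgt H.
Qed.

Lemma pit_order_ge1 N n : wt_ge 1 1 1 ((pit N p n)%:P).
Proof.
elim: n => [|n IH] /=.
  move=> i j; rewrite coef2_polyC coefX.
  by case: (j =P 0%N) => [->|_]; [case: (i =P 1%N) => [->|_] //; rewrite eqxx | rewrite eqxx].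
rewrite (polyC_comp_subst2 _ _ 0); apply: (wt_ge_subst (u := 1%N) (v := 1%N)) => //.
  move=> i j; rewrite coef2_polyC coef_trunc1.
  case: (j =P 0%N) => [->|_]; last by rewrite eqxx.
  by case: ifP => _; [case: i => //; rewrite p0 eqxx | rewrite eqxx].
exact: wt_ge0.
Qed.

Lemma Qit_order_ge1 N n : wt_ge 1 1 1 (Qit N p q n).
Proof.
elim: n => [|n IH] /=.
  move=> i j; rewrite coef2X.
  by case: (i =P 0%N) => [->|_] /=; case: (j =P 1%N) => [->|_] //; rewrite eqxx.
apply: (wt_ge_subst (u := 1%N) (v := 1%N)) => //; last exact: pit_order_ge1.
move=> i j; rewrite coef2_trunc2; case: ifP => _; last by rewrite eqxx.
by case: i => [|i]; case: j => [|j] //; rewrite q00 eqxx.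
Qed.

Lemma pit_trunc_stable N M n : (N <= M)%N ->
  wt_ge 1 1 N.+1 ((pit N p n)%:P - (pit M p n)%:P).
Proof.
move=> HNM; elim: n => [|n IH] /=; first by rewrite subrr; apply: wt_ge0.
rewrite !(polyC_comp_subst2 _ _ 0).
apply: (wt_ge_subtrans (Z := subst2 (Defs.trunc1 M p)%:P (pit N p n) 0)); last first.
  by apply: wt_ge_subst_sub => //; rewrite subrr; apply: wt_ge0.
rewrite -subst2B; apply: (wt_ge_subst (u := 1%N) (v := 1%N)); last 2 first.
- exact: pit_order_ge1.
- exact: wt_ge0.
move=> i j; rewrite -polyCB coef2_polyC coefB !coef_trunc1.
case: (j =P 0%N) => [->|_]; last by rewrite eqxx.
case: ifP => H1; case: ifP => H2; rewrite ?subrr ?eqxx //.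
- by move: (leq_trans H1 HNM); rewrite H2.
- by move=> _; rewrite mul1n muln0 addn0 ltnNge H1.
Qed.

Lemma Qit_trunc_stable N M n : (N <= M)%N -> wt_ge 1 1 N.+1 (Qit N p q n - Qit M p q n).
Proof.
move=> HNM; elim: n => [|n IH] /=; first by rewrite subrr; apply: wt_ge0.
apply: (wt_ge_subtrans (Z := subst2 (trunc2 M q) (pit N p n) (Qit N p q n))); last first.
  by apply: wt_ge_subst_sub => //; apply: pit_trunc_stable.
rewrite -subst2B; apply: (wt_ge_subst (u := 1%N) (v := 1%N)); last 2 first.
- exact: pit_order_ge1.
- exact: Qit_order_ge1.
move=> i j; rewrite coef2B !coef2_trunc2.
case: ifP => H1; case: ifP => H2; rewrite ?subrr ?eqxx //.
- by move: (leq_trans H1 HNM); rewrite H2.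
- by move=> _; rewrite !mul1n ltnNge H1.
Qed.

Lemma Qn_coef2_Qit M n i j : (i + j <= M)%N -> Qn p q n i j = coef2 (Qit M p q n) i j.
Proof.
move=> H; rewrite /Qn; apply/eqP; rewrite -subr_eq0 -coef2B.
by apply/negP => /negP /(Qit_trunc_stable (n := n) H); rewrite !mul1n ltnn.
Qed.

End Truncation.

Lemma poly_neq0_coef (R : nzSemiRingType) (P : {poly R}) k : P`_k != 0 -> P != 0.
Proof. by apply: contraNneq => ->; rewrite coef0. Qed.

Definition wt_leading_part (F : idomainType) a b c T B (Q E : {poly {poly F}}) :=
  [/\ wt_approx a b c Q E, wt_hom a b c E, has_deg E T & has_val E B].

Section LeadingPart.
Variable F : fieldType.

Lemma coef2_mono (c : F) k i j :
  coef2 ((c *: 'X^k)%:P : {poly {poly F}}) i j = if (j == 0%N) && (i == k) then c else 0.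
Proof.
rewrite coef2_polyC; case: (j =P 0%N) => _ //=.
by rewrite coefZ coefXn; case: (i =P k) => _; rewrite ?mulr1 ?mulr0.
Qed.

Lemma wt_hom_mono a b (c : F) k : wt_hom a b (a * k) ((c *: 'X^k)%:P : {poly {poly F}}).
Proof.
move=> i j; rewrite coef2_mono; case: (j =P 0%N) => [->|_] /=; last by rewrite eqxx.
by case: (i =P k) => [->|_]; rewrite ?eqxx // muln0 addn0.
Qed.

Lemma leading_part_subst a b M p q n V (a0 : F) cp Tp Bp Ep q0 m Tq Bq :
  wt_leading_part a b cp Tp Bp (Qit M p q n) Ep -> (0 < Tp)%N ->
  wt_approx a b (a * V) ((pit M p n)%:P) ((a0 *: 'X^V)%:P) -> a0 != 0 -> (0 < V)%N ->
  wt_approx (a * V) cp m (trunc2 M q) q0 -> wt_hom (a * V) cp m q0 ->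
  has_deg q0 Tq -> has_val q0 Bq -> (0 < Bp)%N || (size q0 <= Bq.+1)%N ->
  wt_leading_part a b m (Tq * Tp) (Bp * Bq) (Qit M p q n.+1) (subst2 q0 (a0 *: 'X^V) Ep).
Proof.
move=> [HQ HEp HT HB] HTp HA Ha HV Hq Hq0 HTq HBq Hcase.
have HA0 : wt_hom a b (a * V) ((a0 *: 'X^V)%:P) by apply: wt_hom_mono.
have Hsz : (1 < size (a0 *: 'X^V))%N by rewrite size_scale // size_polyXn ltnS.
split; first exact: (wt_approx_subst Hq Hq0 HA HA0 HQ HEp).
- exact: (wt_hom_subst Hq0 HA0 HEp).
- exact: has_deg_subst.
- exact: has_val_subst.
Qed.

End LeadingPart.

Section PowerLeadingTerm.
Variable F : fieldType.
Variables (p : nat -> F) (delta : nat).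
Hypothesis delta_gt0 : (0 < delta)%N.
Hypothesis p_low : forall i, (i < delta)%N -> p i = 0.
Hypothesis p_lead : p delta != 0.

Lemma pit_leading_term M n : (delta <= M)%N ->
  exists2 a, a != 0 & wt_ge 1 1 (delta ^ n).+1 ((pit M p n - a *: 'X^(delta ^ n))%:P).
Proof.
move=> HM; elim: n => [|n [a Ha IH]] /=.
  by exists 1; rewrite ?oner_eq0 // expn0 scale1r expr1 subrr; apply: wt_ge0.
set V := (delta ^ n)%N.
have HV : (0 < V)%N by rewrite expn_gt0 delta_gt0.
have p_part : wt_approx V 1 (V * delta) ((Defs.trunc1 M p)%:P) ((p delta *: 'X^delta)%:P).
  rewrite /wt_approx -polyCB => i j; rewrite coef2_polyC.
  case: (j =P 0%N) => [->|_]; last by rewrite eqxx.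
  rewrite coefB coef_trunc1 coefZ coefXn muln0 addn0.
  case: (ltngtP i delta) => [Hi|Hi|->].
  + by rewrite p_low // if_same mulr0 subr0 eqxx.
  + move=> _; have := leq_mul (leqnn V) Hi; rewrite mulnS; lia.
  + by rewrite HM mulr1 subrr eqxx.
have p_part_hom : wt_hom V 1 (V * delta) ((p delta *: 'X^delta)%:P : {poly {poly F}}).
  exact: wt_hom_mono.
have pit_part : wt_approx 1 1 V ((pit M p n)%:P) ((a *: 'X^V)%:P) by rewrite /wt_approx -polyCB.
have pit_part_hom : wt_hom 1 1 V ((a *: 'X^V)%:P : {poly {poly F}}).
  by rewrite -[X in wt_hom _ _ X]mul1n; apply: wt_hom_mono.
have zero_part : wt_approx 1 1 1 (0 : {poly {poly F}}) 0 by rewrite /wt_approx subrr; apply: wt_ge0.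
have := wt_approx_subst p_part p_part_hom pit_part pit_part_hom zero_part (wt_hom0 _ _ _).
rewrite -!polyC_comp_subst2 comp_polyZ comp_Xn_poly exprZn -exprM scalerA => H.
exists (p delta * a ^+ delta); first by rewrite mulf_neq0 // expf_neq0.
by rewrite expnSr polyCB; exact: H.
Qed.

Lemma pit_leading_part a b M n : (0 < a)%N -> (delta <= M)%N ->
  exists2 a0, a0 != 0 &
    wt_approx a b (a * delta ^ n) ((pit M p n)%:P) ((a0 *: 'X^(delta ^ n))%:P).
Proof.
move=> Ha HM; have [a0 Ha0 H] := pit_leading_term n HM; exists a0 => //.
rewrite /wt_approx -polyCB; apply: (wt_ge_le (c := (a * (delta ^ n).+1)%N)).
  by rewrite mulnS; lia.
exact: wt_ge_polyC_scale.
Qed.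

End PowerLeadingTerm.

Lemma convex_comb_eq0 (R : realFieldType) (t u w : R) : 0 < t < 1 -> 0 <= u -> 0 <= w ->
  t * u + (1 - t) * w = 0 -> u = 0 /\ w = 0.
Proof.
move=> /andP [Ht0 Ht1] Hu Hw H.
have H1 : 0 <= t * u by rewrite mulr_ge0 // ltW.
have H2 : 0 <= (1 - t) * w by rewrite mulr_ge0 // subr_ge0 ltW.
have Ht' : 0 < 1 - t by rewrite subr_gt0.
by split; [apply: (mulfI (lt0r_neq0 Ht0)) | apply: (mulfI (lt0r_neq0 Ht'))]; rewrite mulr0; lra.
Qed.

Section NewtonPolygon.
Variable R : realType.
Variable K : comNzRingType.
Variable g : nat -> nat -> K.
Implicit Types (u v w : R * R).
Local Notation NP := (newton_polygon (R := R) g).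

Lemma newton_polygon_corner i j : g i j != 0 -> NP (i%:R, j%:R).
Proof.
move=> H; exists 1%N, (fun _ => 1), (fun _ => (i%:R, j%:R)).
by rewrite !big_ord1 !mul1r; split=> //; split=> //; split=> // _; exists i, j.
Qed.

Lemma newton_polygon_segment u w t : in_quadrants g u -> in_quadrants g w -> 0 <= t <= 1 ->
  NP (t * u.1 + (1 - t) * w.1, t * u.2 + (1 - t) * w.2).
Proof.
move=> Hu Hw /andP [Ht0 Ht1].
exists 2%N, (fun k : 'I_2 => if k == ord0 then t else 1 - t),
  (fun k : 'I_2 => if k == ord0 then u else w).
rewrite !big_ord_recl !big_ord0 /= !addr0.
split; first by move=> k; case: ifP => _ //; rewrite subr_ge0.
split; first by rewrite addrC subrK.
by split=> // k; case: ifP.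
Qed.

Lemma newton_polygon_shift v e1 e2 : NP v -> 0 <= e1 -> 0 <= e2 -> NP (v.1 + e1, v.2 + e2).
Proof.
case=> m [lam [pts [H0 [H1 [Hq [Hv1 Hv2]]]]]] He1 He2.
exists m, lam, (fun k => ((pts k).1 + e1, (pts k).2 + e2)).
split=> //; split=> //; split.
  move=> k; have [i [j [Hg [Hi Hj]]]] := Hq k; exists i, j; split=> //=.
  by split; [apply: le_trans Hi _ | apply: le_trans Hj _]; rewrite lerDl.
have E (e : R) (f : 'I_m -> R) : \sum_(k < m) lam k * (f k + e) = \sum_(k < m) lam k * f k + e.
  rewrite (eq_bigr (fun k => lam k * f k + lam k * e)); last by move=> k _; rewrite mulrDr.
  by rewrite big_split /= -big_distrl /= H1 mul1r.
by rewrite /= !E Hv1 Hv2.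
Qed.

Section AboveLine.
Variables (a b c lo hi : R).
Hypotheses (a_gt0 : 0 < a) (b_gt0 : 0 < b).
Hypothesis g_above : forall i j, g i j != 0 -> c <= a * i%:R + b * j%:R /\
  (a * i%:R + b * j%:R = c -> lo <= i%:R <= hi).

Lemma in_quadrants_above_line u : in_quadrants g u ->
  c <= a * u.1 + b * u.2 /\ (a * u.1 + b * u.2 = c -> lo <= u.1 <= hi).
Proof.
move=> [i [j [Hg [Hi Hj]]]]; have [Hc Heq] := g_above Hg.
have Hle : a * i%:R + b * j%:R <= a * u.1 + b * u.2 by rewrite lerD // ler_wpM2l // ltW.
split=> [|HL]; first exact: le_trans Hc Hle.
have Hx : u.1 = i%:R.
  have : 0 <= b * (u.2 - j%:R) by rewrite mulr_ge0 ?subr_ge0 // ltW.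
  have : 0 <= a * (u.1 - i%:R) by rewrite mulr_ge0 ?subr_ge0 // ltW.
  move=> Hx Hy; have /eqP : a * (u.1 - i%:R) = 0 by nra.
  by rewrite mulf_eq0 gt_eqF //= subr_eq0 => /eqP.
rewrite Hx; apply: Heq; apply/eqP; rewrite eq_le Hc andbT.
by move: Hle; rewrite HL.
Qed.

Lemma newton_polygon_above_line v :
  NP v -> c <= a * v.1 + b * v.2 /\ (a * v.1 + b * v.2 = c -> lo <= v.1 <= hi).
Proof.
move=> [m [lam [pts [H0 [H1 [Hq [Hv1 Hv2]]]]]]].
set L := fun k => a * (pts k).1 + b * (pts k).2.
have HL k := in_quadrants_above_line (Hq k).
have HvL : a * v.1 + b * v.2 = \sum_(k < m) lam k * L k.
  rewrite Hv1 Hv2 !big_distrr -big_split /=; apply: eq_bigr => k _; rewrite /L; ring.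
have Hconst (x : R) : x = \sum_(k < m) lam k * x by rewrite -big_distrl /= H1 mul1r.
split.
  by rewrite HvL [X in X <= _]Hconst; apply: ler_sum => k _; rewrite ler_wpM2l //; case: (HL k).
move=> Heq.
have Hk k : lam k = 0 \/ L k = c.
  have Hnn k' : true -> 0 <= lam k' * (L k' - c).
    by move=> _; rewrite mulr_ge0 ?subr_ge0 //; case: (HL k').
  have Hz : \sum_(k < m) lam k * (L k - c) = 0.
    under eq_bigr do rewrite mulrBr.
    by rewrite sumrB -HvL -Hconst Heq subrr.
  move/eqP: (psumr_eq0P Hnn Hz (i := k) isT).
  by rewrite mulf_eq0 subr_eq0 => /orP [/eqP ->|/eqP ->]; [left | right].
rewrite Hv1; apply/andP; split.
  rewrite [X in X <= _]Hconst; apply: ler_sum => k _.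
  by case: (Hk k) => [->|/(HL k).2 /andP [Hl _]]; rewrite ?mul0r // ler_wpM2l.
rewrite [X in _ <= X]Hconst; apply: ler_sum => k _.
by case: (Hk k) => [->|/(HL k).2 /andP [_ Hh]]; rewrite ?mul0r // ler_wpM2l.
Qed.

End AboveLine.

Lemma not_vertex_between u w v t : NP u -> NP w -> u != w -> 0 < t < 1 ->
  v = (t * u.1 + (1 - t) * w.1, t * u.2 + (1 - t) * w.2) -> ~ is_vertex g v.
Proof. by move=> Hu Hw Huw Ht Hv [_ H]; move/eqP: Huw; apply; apply: (H u w t). Qed.

Lemma not_vertex_above (x y0 y : R) : NP (x, y0) -> y0 < y -> NP (x, y) -> ~ is_vertex g (x, y).
Proof.
move=> H0 Hy H.
have H2 : NP (x + 0, y + (y - y0)) by apply: (newton_polygon_shift H) => //; rewrite subr_ge0 ltW.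
rewrite addr0 in H2.
apply: (not_vertex_between H0 H2 (t := 1/2)).
- by apply/negP => /eqP [E]; lra.
- by apply/andP; split; lra.
- by congr pair => /=; lra.
Qed.

Lemma is_vertex_edge_end (a b c lo hi : R) (i0 j0 : nat) : 0 < a -> 0 < b ->
  (forall i j, g i j != 0 -> c <= a * i%:R + b * j%:R /\
     (a * i%:R + b * j%:R = c -> lo <= i%:R <= hi)) ->
  g i0 j0 != 0 -> a * i0%:R + b * j0%:R = c -> (i0%:R = lo \/ i0%:R = hi) ->
  is_vertex g (i0%:R : R, j0%:R : R).
Proof.
move=> Ha Hb Hs Hg HL Hend; split; first exact: newton_polygon_corner.
move=> [x1 y1] [x2 y2] t N1 N2 Ht [E1 E2].
have [B1 C1] := newton_polygon_above_line Ha Hb Hs N1.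
have [B2 C2] := newton_polygon_above_line Ha Hb Hs N2.
simpl in *.
have [Z1 Z2] : a * x1 + b * y1 - c = 0 /\ a * x2 + b * y2 - c = 0.
  by apply: (convex_comb_eq0 Ht); rewrite ?subr_ge0 // -HL E1 E2; ring.
have /C1 /andP [l1 h1] : a * x1 + b * y1 = c by lra.
have /C2 /andP [l2 h2] : a * x2 + b * y2 = c by lra.
have Hx : x1 = x2.
  case: Hend => Hend.
    have [] : x1 - lo = 0 /\ x2 - lo = 0.
      by apply: (convex_comb_eq0 Ht); rewrite ?subr_ge0 // -Hend E1; ring.
    lra.
  have [] : hi - x1 = 0 /\ hi - x2 = 0.
    by apply: (convex_comb_eq0 Ht); rewrite ?subr_ge0 // -Hend E1; ring.
  lra.
have Hy : y1 = y2.
  by apply: (mulfI (lt0r_neq0 Hb)); rewrite -Hx in Z2; lra.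
by rewrite Hx Hy.
Qed.

(* If the chord were below the vertex, the vertex would lie above a point of
   [N(g)]; if it passed through it, the vertex would be interior to the chord. *)
Lemma vertex_below_chord (x1 y1 x2 y2 : nat) (x y : R) :
  g x1 y1 != 0 -> g x2 y2 != 0 -> x1%:R < x < x2%:R -> is_vertex g (x, y) ->
  exists2 s, 0 < s < 1 & x = (1 - s) * x1%:R + s * x2%:R /\ y < (1 - s) * y1%:R + s * y2%:R.
Proof.
move=> G1 G2 /andP [Hx1 Hx2] Hv.
set s := (x - x1%:R) / (x2%:R - x1%:R).
have Hd : 0 < (x2%:R : R) - x1%:R by rewrite subr_gt0; lra.
have Hs1 : s < 1 by rewrite ltr_pdivrMr // mul1r; lra.
have HsS : s * (x2%:R - x1%:R) = x - x1%:R by rewrite /s mulfVK // lt0r_neq0.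
have Ex : (1 - s) * x1%:R + (1 - (1 - s)) * x2%:R = x by nra.
set Sy := (1 - s) * y1%:R + (1 - (1 - s)) * y2%:R.
have Hs0 : 0 < s by rewrite /s divr_gt0 // subr_gt0.
exists s; first by rewrite Hs0 Hs1.
have NS : NP (x, Sy).
  have Q1 : in_quadrants g ((x1%:R : R), (y1%:R : R)) by exists x1, y1.
  have Q2 : in_quadrants g ((x2%:R : R), (y2%:R : R)) by exists x2, y2.
  have Ht : 0 <= 1 - s <= 1 by apply/andP; split; lra.
  by have := newton_polygon_segment Q1 Q2 Ht; rewrite /= Ex.
split; first by rewrite -Ex; ring.
have -> : (1 - s) * y1%:R + s * y2%:R = Sy by rewrite /Sy; ring.
case: (ltgtP y Sy) => [//|Hlt|Heq].
  by case: (not_vertex_above NS Hlt (proj1 Hv) Hv).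
case: (not_vertex_between (u := (x1%:R, y1%:R)) (w := (x2%:R, y2%:R)) (t := 1 - s) _ _ _ _ _ Hv).
- exact: newton_polygon_corner.
- exact: newton_polygon_corner.
- by apply/negP => /eqP [E _]; lra.
- by apply/andP; split; lra.
- by rewrite /= Ex Heq.
Qed.

Lemma next_vertex_edge (a b c : R) (i1 j1 i2 j2 : nat) : 0 < a -> 0 < b ->
  (forall i j, g i j != 0 -> c <= a * i%:R + b * j%:R /\
     (a * i%:R + b * j%:R = c -> (i1%:R : R) <= (i%:R : R) <= (i2%:R : R))) ->
  g i1 j1 != 0 -> g i2 j2 != 0 ->
  a * i1%:R + b * j1%:R = c -> a * i2%:R + b * j2%:R = c -> (i1 < i2)%N ->
  next_vertex g (i1%:R : R, j1%:R : R) (i2%:R, j2%:R).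
Proof.
move=> Ha Hb Hs G1 G2 L1 L2 Hlt.
split; first by apply: (is_vertex_edge_end Ha Hb Hs G1 L1); left.
split; first by apply: (is_vertex_edge_end Ha Hb Hs G2 L2); right.
split; first by rewrite /= ltr_nat.
move=> [x y] Hv /= [Hx1 Hx2].
have [Bv _] := newton_polygon_above_line Ha Hb Hs (proj1 Hv).
have [s _ [Hx Hy]] := vertex_below_chord G1 G2 (introT andP (conj Hx1 Hx2)) Hv.
have LS : a * x + b * ((1 - s) * j1%:R + s * j2%:R) = c.
  rewrite Hx; transitivity ((1 - s) * (a * i1%:R + b * j1%:R) + s * (a * i2%:R + b * j2%:R)).
    by ring.
  by rewrite L1 L2; ring.
have : b * y < b * ((1 - s) * j1%:R + s * j2%:R) by rewrite ltr_pM2l.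
by simpl in Bv; lra.
Qed.

End NewtonPolygon.

Lemma classical_ex_min (P : nat -> Prop) n : P n -> exists m, P m /\ forall k, P k -> (m <= k)%N.
Proof.
elim: n {-2}n (leqnn n) => [|N IH] n Hn HP.
  by move: Hn HP; rewrite leqn0 => /eqP -> HP; exists 0%N; split.
case: (classic (exists k, (k < n)%N /\ P k)) => [[k [Hk Pk]]|Hno].
  by apply: (IH k) => //; rewrite -ltnS; apply: leq_trans Hk Hn.
exists n; split=> // k Pk; rewrite leqNgt; apply/negP => Hk; apply: Hno; by exists k.
Qed.

Lemma classical_ex_max (P : nat -> Prop) n B : P n -> (forall k, P k -> (k <= B)%N) ->
  exists m, P m /\ forall k, P k -> (k <= m)%N.
Proof.
move=> Pn HB.
have Pn' : P (B - (B - n))%N by rewrite subKn // HB.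
have [m' [Pm' Hm']] := @classical_ex_min (fun k => P (B - k)%N) (B - n)%N Pn'.
exists (B - m')%N; split=> // k Pk.
have := Hm' (B - k)%N; rewrite subKn ?HB // => /(_ Pk) H.
have := HB k Pk; lia.
Qed.

Definition supporting_edge (K : comNzRingType) (g : nat -> nat -> K) (a b c lo hi : nat) :=
  forall i j, g i j != 0 ->
    (c <= a * i + b * j)%N /\ ((a * i + b * j)%N = c -> (lo <= i <= hi)%N).

Lemma natr_lin (R : nzSemiRingType) (a b i j : nat) :
  (a%:R * i%:R + b%:R * j%:R : R) = (a * i + b * j)%N%:R.
Proof. by rewrite natrD !natrM. Qed.

Lemma steep_supporting_edge (K : comNzRingType) (g : nat -> nat -> K) (i0 j0 k : nat) :
  (j0 < k)%N -> (forall i j, g i j != 0 -> (i0 <= i)%N) ->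
  (forall j, g i0 j != 0 -> (j0 <= j)%N) ->
  supporting_edge g k 1 (k * i0 + j0) i0 (k * i0 + j0).
Proof.
move=> Hk Hi0 Hj0 i j Hg; have Hi := Hi0 i j Hg.
have Hle : (k * i0 + j0 <= k * i + 1 * j)%N.
  move: Hi; rewrite leq_eqVlt => /orP [/eqP Ei|Hlt].
    by rewrite -Ei mul1n leq_add2l; apply: Hj0; rewrite Ei.
  have := leq_mul (leqnn k) Hlt; rewrite mulnS; lia.
split=> // HL; rewrite Hi /=; have : (i <= k * i)%N by rewrite leq_pmull //; lia.
lia.
Qed.

Section SupportingEdge.
Variable R : realType.
Variable K : comNzRingType.
Variable g : nat -> nat -> K.

Lemma supporting_edgeR a b c lo hi : supporting_edge g a b c lo hi ->
  forall i j, g i j != 0 -> (c%:R : R) <= a%:R * i%:R + b%:R * j%:R /\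
    (a%:R * i%:R + b%:R * j%:R = c%:R :> R -> (lo%:R : R) <= (i%:R : R) <= (hi%:R : R)).
Proof.
move=> H i j Hq; have [H1 H2] := H i j Hq; rewrite natr_lin ler_nat; split=> // /eqP.
by rewrite eqr_nat => /eqP /H2; rewrite !ler_nat.
Qed.

Lemma is_vertex_edge_end_nat a b c lo hi i0 j0 : (0 < a)%N -> (0 < b)%N ->
  supporting_edge g a b c lo hi -> g i0 j0 != 0 -> (a * i0 + b * j0)%N = c ->
  i0 = lo \/ i0 = hi -> is_vertex g (i0%:R : R, j0%:R : R).
Proof.
move=> Ha Hb Hc Hq HL Hend.
apply: (is_vertex_edge_end (a := a%:R) (b := b%:R) (c := c%:R) (lo := lo%:R) (hi := hi%:R)).
- by rewrite ltr0n.
- by rewrite ltr0n.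
- exact: supporting_edgeR.
- exact: Hq.
- by rewrite natr_lin HL.
- by case: Hend => ->; [left | right].
Qed.

Lemma newton_polygon_above_edge a b c lo hi x y : (0 < a)%N -> (0 < b)%N ->
  supporting_edge g a b c lo hi -> newton_polygon g (x%:R : R, y%:R : R) ->
  (c <= a * x + b * y)%N /\ ((a * x + b * y)%N = c -> (lo <= x <= hi)%N).
Proof.
move=> Ha Hb Hc HN.
have := newton_polygon_above_line (a := a%:R) (b := b%:R) (c := c%:R)
  (lo := lo%:R) (hi := hi%:R) _ _ (supporting_edgeR Hc) HN.
rewrite !ltr0n /= => /(_ Ha Hb) [H1 H2]; rewrite natr_lin ler_nat in H1; split=> // HL.
by move: H2; rewrite natr_lin HL => /(_ erefl); rewrite !ler_nat.
Qed.

Lemma next_vertex_weighted_edge (a b c x1 T x2 B : nat) : (0 < a)%N -> (0 < b)%N ->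
  (forall i j, g i j != 0 -> (c <= a * i + b * j)%N /\
     ((a * i + b * j)%N = c -> (B <= j <= T)%N)) ->
  (a * x1 + b * T)%N = c -> (a * x2 + b * B)%N = c ->
  g x1 T != 0 -> g x2 B != 0 -> (B < T)%N ->
  [/\ next_vertex g (x1%:R : R, T%:R : R) (x2%:R, B%:R),
      slope (x1%:R : R) T%:R x2%:R B%:R = - (a%:R / b%:R)
    & b%:R * y_intercept (x1%:R : R) T%:R x2%:R B%:R = c%:R].
Proof.
move=> Ha Hb Hs L1 L2 G1 G2 HBT.
have Hlt : (x1 < x2)%N.
  have h : (b * B < b * T)%N by rewrite ltn_pmul2l.
  have : (a * x1 < a * x2)%N by lia.
  by rewrite ltn_pmul2l.
have HaR : (0 : R) < a%:R by rewrite ltr0n.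
have HbR : (0 : R) < b%:R by rewrite ltr0n.
have E1 : (a%:R * x1%:R + b%:R * T%:R : R) = c%:R by rewrite natr_lin L1.
have E2 : (a%:R * x2%:R + b%:R * B%:R : R) = c%:R by rewrite natr_lin L2.
have Hd : (x2%:R - x1%:R : R) != 0 by rewrite subr_eq0 eqr_nat gtn_eqF.
have Hb0 : (b%:R : R) != 0 by rewrite lt0r_neq0.
have Hsl : slope (x1%:R : R) T%:R x2%:R B%:R = - (a%:R / b%:R).
  have E4 : b%:R * (B%:R - T%:R) = - (a%:R * (x2%:R - x1%:R)) :> R by lra.
  rewrite /slope (_ : (B%:R - T%:R : R) = b%:R^-1 * - (a%:R * (x2%:R - x1%:R))).
    by field; rewrite Hb0 Hd.
  by rewrite -E4 mulKf.
split=> //; last by rewrite /y_intercept -/(slope _ _ _ _) Hsl -E1; field; rewrite ?Hb0 ?Hd.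
apply: (next_vertex_edge (a := a%:R) (b := b%:R) (c := c%:R)) => //;
  rewrite ?natr_lin ?L1 ?L2 //.
move=> i j Hg; have [H1 H2] := Hs i j Hg; rewrite natr_lin ler_nat; split=> // /eqP.
rewrite eqr_nat => /eqP HL; have /andP [Hj1 Hj2] := H2 HL.
have := leq_mul (leqnn b) Hj1; have := leq_mul (leqnn b) Hj2.
by rewrite !ler_nat => ? ?; apply/andP; split; rewrite -(leq_pmul2l Ha); lia.
Qed.

End SupportingEdge.

Lemma gamma_n0 g de dd : gamma_n g de dd 0 = 0%N.
Proof. by rewrite /gamma_n big_ord0 muln0. Qed.

Lemma gamma_nS g de dd n : gamma_n g de dd n.+1 = (g * de ^ n + dd * gamma_n g de dd n)%N.
Proof.
rewrite /gamma_n big_ord_recl /= subn0 expn0 muln1 mulnDr; congr (_ + _)%N.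
rewrite mulnCA !big_distrr /=; apply: eq_bigr => k _.
rewrite /bump /= add1n expnS.
have -> : (n - k.+1 = n.-1 - k)%N by case: n k => [[]//|n] k /=; lia.
ring.
Qed.

Lemma gamma_n_geometric (a b delta D : nat) n : (a + b * D = b * delta)%N ->
  (a * gamma_n 1 delta D n + b * D ^ n = b * delta ^ n)%N.
Proof.
move=> H; elim: n => [|n IH]; first by rewrite gamma_n0 muln0 !expn0.
by rewrite gamma_nS mul1n !expnS; nia.
Qed.

Lemma edge_weight_eq (gam d C D : nat) : (gam <= C)%N -> (D <= d)%N ->
  ((d - D) * C + (C - gam) * D = (d - D) * gam + (C - gam) * d)%N.
Proof.
move=> HgC HDd; have -> : C = (gam + (C - gam))%N by rewrite subnKC.
have -> : d = (D + (d - D))%N by rewrite subnKC.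
by rewrite !addKn; ring.
Qed.

Section FirstEdge.
Variable R : realType.
Variable K : comNzRingType.
Variable q : nat -> nat -> K.
Variables (gam d C D : nat).
Hypothesis q_neq0 : exists i j, q i j != 0.
Hypothesis first_vertex : is_vertex q (gam%:R : R, d%:R : R).
Hypothesis first_vertex_left : forall u : R * R, is_vertex q u -> gam%:R <= u.1.
Hypothesis second_vertex : next_vertex q (gam%:R : R, d%:R : R) (C%:R, D%:R).
Local Notation NP := (newton_polygon (R := R) q).

(* The lowest of the leftmost monomials is isolated by a steep supporting line,
   so it is a vertex; no vertex lies left of [gam], hence it is [(gam, d)]. *)
Lemma first_vertex_leftmost : q gam d != 0 /\ forall i j, q i j != 0 -> (gam <= i)%N.
Proof.
have [i1 [j1 H1]] := q_neq0.
have [i0 [[j' Hj'] Hi0]] :=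
  @classical_ex_min (fun i => exists j, q i j != 0) i1 (ex_intro _ j1 H1).
have [j0 [Hq0 Hj0]] := @classical_ex_min (fun j => q i0 j != 0) j' Hj'.
have Hi0' i j : q i j != 0 -> (i0 <= i)%N by move=> Hq; apply: Hi0; exists j.
have Hk : (j0 < j0 + d + 1)%N by lia.
have HK : (0 < j0 + d + 1)%N by rewrite addn1.
have Hc := steep_supporting_edge Hk Hi0' Hj0.
have Hv0 : is_vertex q (i0%:R : R, j0%:R : R).
  by apply: (is_vertex_edge_end_nat R HK (ltn0Sn 0) Hc Hq0); [rewrite mul1n | left].
have Hg : (gam <= i0)%N by have := first_vertex_left Hv0; rewrite /= ler_nat.
have [B1 _] := newton_polygon_above_edge HK (ltn0Sn 0) Hc (proj1 first_vertex).
have Egam : gam = i0.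
  apply/eqP; rewrite eqn_leq Hg /= leqNgt; apply/negP => Hlt.
  by have := leq_mul (leqnn (j0 + d + 1)) Hlt; rewrite mulnS in B1 *; lia.
subst i0.
have Hdj : (j0 <= d)%N by move: B1; rewrite mul1n leq_add2l.
have Ed : j0 = d.
  apply/eqP; rewrite eqn_leq Hdj /= leqNgt; apply/negP => Hlt.
  apply: (not_vertex_above (newton_polygon_corner R Hq0) _ (proj1 first_vertex) first_vertex).
  by rewrite ltr_nat.
by subst j0; split.
Qed.

Lemma first_lt_second_x : (gam < C)%N.
Proof. by case: second_vertex => _ [_ [+ _]]; rewrite /= ltr_nat. Qed.

Lemma second_vertex_is_vertex : is_vertex q (C%:R : R, D%:R : R).
Proof. by case: second_vertex => _ []. Qed.

(* Otherwise [(C, D)] is the midpoint of [(gam, D)] and [(2C - gam, D)]. *)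
Lemma second_lt_first_y : (D < d)%N.
Proof.
rewrite ltnNge; apply/negP => HdD.
have [Hqg _] := first_vertex_leftmost.
have vC := second_vertex_is_vertex.
have N1 : NP (gam%:R + 0, d%:R + (D%:R - d%:R)).
  by apply: newton_polygon_shift (newton_polygon_corner _ Hqg) _ _; rewrite // subr_ge0 ler_nat.
have N2 : NP (C%:R + (C%:R - gam%:R), D%:R + 0).
  apply: newton_polygon_shift (proj1 vC) _ _ => //.
  by rewrite subr_ge0 ler_nat ltnW // first_lt_second_x.
have HgC : (gam%:R : R) < C%:R by rewrite ltr_nat first_lt_second_x.
apply: (not_vertex_between N1 N2 (t := 1/2) _ _ _ vC).
- by apply/negP => /eqP [E _]; lra.
- by apply/andP; split; lra.
- by congr pair => /=; lra.
Qed.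

(* [al i + be j = cc] is the line through the first two vertices. *)
Local Notation al := (d - D)%N.
Local Notation be := (C - gam)%N.
Local Notation cc := (al * gam + be * d)%N.

Lemma second_vertex_on_edge : (al * C + be * D)%N = cc.
Proof. exact: edge_weight_eq (ltnW first_lt_second_x) (ltnW second_lt_first_y). Qed.

Lemma edge_weights_gt0 : (0 < al)%N /\ (0 < be)%N.
Proof. by rewrite !subn_gt0 second_lt_first_y first_lt_second_x. Qed.

(* [(C, D)] lies strictly below the chord from [(gam, d)] to [(i, j)]. *)
Lemma beyond_second_vertex i j : q i j != 0 -> (C < i)%N -> (cc < al * i + be * j)%N.
Proof.
move=> Hq HCi; have [Hqg _] := first_vertex_leftmost.
have HgC := first_lt_second_x.
have [] := vertex_below_chord Hqg Hq _ second_vertex_is_vertex.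
  by rewrite !ltr_nat HgC HCi.
move=> s /andP [Hs0 Hs1] [Ex Hy].
have [Ha Hb] := edge_weights_gt0.
rewrite -(ltr_nat R) -!natr_lin.
have Hb' : (0 : R) < be%:R by rewrite ltr0n.
have Hcc : (al%:R * C%:R + be%:R * D%:R : R) = (al%:R * gam%:R + be%:R * d%:R)
  by rewrite !natr_lin second_vertex_on_edge.
have : be%:R * D%:R < be%:R * ((1 - s) * d%:R + s * j%:R) :> R by rewrite ltr_pM2l.
rewrite Ex in Hcc; nra.
Qed.

Lemma first_edge_supports i j : q i j != 0 -> (cc <= al * i + be * j)%N.
Proof.
move=> Hq1; rewrite leqNgt; apply/negP => Hlt.
have [Hqg Hleft] := first_vertex_leftmost.
have [Ha Hb] := edge_weights_gt0.
have [m0 [[im' [jm' [Hqm' Hm']]] Hmin]] :=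
  @classical_ex_min (fun k => exists i j, q i j != 0 /\ (al * i + be * j)%N = k) _
  (ex_intro _ i (ex_intro _ j (conj Hq1 erefl))).
have [im [[jm [Hqm Hm]] Himin]] :=
  @classical_ex_min (fun i => exists j, q i j != 0 /\ (al * i + be * j)%N = m0) im'
  (ex_intro _ jm' (conj Hqm' Hm')).
have Hc : supporting_edge q al be m0 im m0.
  move=> i' j' Hq; split; first by apply: Hmin; exists i', j'.
  move=> HL; rewrite Himin /=; last by exists j'.
  by rewrite -HL; apply: leq_trans (leq_addr _ _); rewrite leq_pmull.
have Hvm : is_vertex q (im%:R : R, jm%:R : R).
  by apply: (is_vertex_edge_end_nat R Ha Hb Hc Hqm Hm); left.
have Hm0 : (m0 < cc)%N by apply: leq_ltn_trans Hlt; apply: Hmin; exists i, j.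
have Hgi : (gam <= im)%N by have := first_vertex_left Hvm; rewrite /= ler_nat.
case: (ltngtP im C) => [HimC|HimC|EC].
- move: Hgi; rewrite leq_eqVlt => /orP [/eqP Eg|Hgi].
    subst im; have Hj : (jm < d)%N.
      by rewrite -(ltn_pmul2l Hb) -(ltn_add2l (al * gam)) Hm.
    apply: (not_vertex_above (newton_polygon_corner _ Hqm) _ (proj1 first_vertex) first_vertex).
    by rewrite ltr_nat.
  by case: second_vertex => _ [_ [_ H]]; apply: (H _ Hvm); rewrite /= !ltr_nat.
- by have := beyond_second_vertex Hqm HimC; rewrite Hm ltnNge ltnW.
- subst im; have Hj : (jm < D)%N.
    by rewrite -(ltn_pmul2l Hb) -(ltn_add2l (al * C)) Hm second_vertex_on_edge.
  apply: (not_vertex_above (newton_polygon_corner _ Hqm) _ (proj1 second_vertex_is_vertex)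
    second_vertex_is_vertex).
  by rewrite ltr_nat.
Qed.

Lemma first_edge_right_end i j : q i j != 0 -> (al * i + be * j)%N = cc -> (i <= C)%N.
Proof.
by move=> Hq HL; rewrite leqNgt; apply/negP => /(beyond_second_vertex Hq); rewrite HL ltnn.
Qed.

Lemma second_vertex_coef : q C D != 0.
Proof.
have [Hqg Hleft] := first_vertex_leftmost.
have [Ha Hb] := edge_weights_gt0.
have [ix [[jx [Hqx Hx]] Hxmax]] :=
  @classical_ex_max (fun i => exists j, q i j != 0 /\ (al * i + be * j)%N = cc) gam C
  (ex_intro _ d (conj Hqg erefl))
  (fun k '(ex_intro j (conj Hq HL)) => first_edge_right_end Hq HL).
have Hc : supporting_edge q al be cc gam ix.
  move=> i j Hq; split; first exact: first_edge_supports.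
  by move=> HL; rewrite (Hleft i j Hq) /=; apply: Hxmax; exists j.
have [_ /(_ second_vertex_on_edge) /andP [_ HCix]] :=
  newton_polygon_above_edge Ha Hb Hc (proj1 second_vertex_is_vertex).
have Eix : ix = C by apply/eqP; rewrite eqn_leq HCix (first_edge_right_end Hqx Hx).
subst ix; suff -> : D = jx by [].
by apply/eqP; rewrite -(eqn_pmul2l Hb) -(eqn_add2l (al * C)) Hx second_vertex_on_edge.
Qed.

End FirstEdge.

Section FirstEdgeIterates.
Variable F : fieldType.
Local Notation P2 := {poly {poly F}}.
Variables (p : nat -> F) (q : nat -> nat -> F) (delta gam d C D : nat).
Hypothesis delta_gt0 : (0 < delta)%N.
Hypothesis p_low : forall i, (i < delta)%N -> p i = 0.
Hypothesis p_lead : p delta != 0.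
Hypothesis q00 : q 0%N 0%N = 0.
Hypothesis gam_lt_C : (gam < C)%N.
Hypothesis D_lt_d : (D < d)%N.
Local Notation al := (d - D)%N.
Local Notation be := (C - gam)%N.
Local Notation cc := (al * gam + be * d)%N.
Hypothesis q_left : forall i j, q i j != 0 -> (gam <= i)%N.
Hypothesis q_above_edge : forall i j, q i j != 0 -> (cc <= al * i + be * j)%N.
Hypothesis q_edge_right : forall i j, q i j != 0 -> (al * i + be * j)%N = cc -> (i <= C)%N.
Hypothesis q_first : q gam d != 0.
Hypothesis q_second : q C D != 0.

Let al_gt0 : (0 < al)%N. Proof. by rewrite subn_gt0. Qed.
Let be_gt0 : (0 < be)%N. Proof. by rewrite subn_gt0. Qed.
Let p0 : p 0%N = 0. Proof. exact: p_low. Qed.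

Definition edge_poly : P2 :=
  \poly_(j < d.+1) \poly_(i < C.+1) (if (al * i + be * j == cc)%N then q i j else 0).

Lemma coef2_edge_poly i j : coef2 edge_poly i j =
  if [&& (j <= d)%N, (i <= C)%N & (al * i + be * j == cc)%N] then q i j else 0.
Proof.
rewrite /coef2 /edge_poly coef_poly ltnS; case: (leqP j d) => Hj /=; last by rewrite coef0.
by rewrite coef_poly ltnS; case: (leqP i C).
Qed.

Lemma wt_hom_edge_poly : wt_hom al be cc edge_poly.
Proof.
move=> i j; rewrite coef2_edge_poly; case: (al * i + be * j =P cc) => [//|_].
by rewrite !andbF eqxx.
Qed.

Lemma edge_y_le i j : q i j != 0 -> (al * i + be * j)%N = cc -> (j <= d)%N.
Proof.
move=> Hq HL; have Hg := q_left Hq.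
suff : (be * j <= be * d)%N by rewrite leq_pmul2l.
by have := leq_mul (leqnn al) Hg; lia.
Qed.

Lemma wt_approx_edge_poly M : (C + d <= M)%N -> wt_approx al be cc (trunc2 M q) edge_poly.
Proof.
move=> HM i j; rewrite coef2B coef2_trunc2 coef2_edge_poly.
case: (al * i + be * j =P cc) => [HL|HL].
  case: (eqVneq (q i j) 0) => [->|Hq]; first by rewrite !if_same subrr eqxx.
  have Hi := q_edge_right Hq HL; have Hj := edge_y_le Hq HL.
  have Hij : (i + j <= M)%N by apply: leq_trans HM; apply: leq_add.
  by rewrite Hij Hj Hi /= subrr eqxx.
rewrite !andbF subr0; case: ifP => _; last by rewrite eqxx.
by move=> /q_above_edge H; rewrite ltn_neqAle H andbT; apply/eqP => E; exact: HL (esym E).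
Qed.

Lemma has_deg_edge_poly : has_deg edge_poly d.
Proof.
rewrite /has_deg /edge_poly size_poly_eq //=; apply: (poly_neq0_coef (k := gam)).
by rewrite coef_poly ltnS (ltnW gam_lt_C) eqxx.
Qed.

Lemma has_val_edge_poly : has_val edge_poly D.
Proof.
split.
  move=> j Hj; apply/polyP => i; rewrite coef0 -[_`_i]/(coef2 edge_poly i j) coef2_edge_poly.
  case: (eqVneq (q i j) 0) => [->|Hq]; first by rewrite if_same.
  case: (al * i + be * j =P cc) => [HL|_]; last by rewrite !andbF.
  have Hi := q_edge_right Hq HL; exfalso.
  have : (be * D <= be * j)%N by have := leq_mul (leqnn al) Hi; lia.
  by rewrite leq_pmul2l // leqNgt Hj.
apply: (poly_neq0_coef (k := C)); rewrite -[_`_C]/(coef2 edge_poly C D) coef2_edge_poly.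
rewrite (ltnW D_lt_d) leqnn edge_weight_eq ?eqxx //; exact: ltnW.
Qed.

Definition corner_mono : P2 := (q gam d *: 'X^gam) *: 'X^d.

Lemma coef2_corner_mono i j :
  coef2 corner_mono i j = if (i == gam) && (j == d) then q gam d else 0.
Proof.
rewrite /coef2 coefZ coefXn; case: (j =P d) => _; last by rewrite mulr0 coef0 andbF.
by rewrite mulr1 coefZ coefXn andbT; case: (i =P gam) => _; rewrite ?mulr1 ?mulr0.
Qed.

Lemma wt_hom_corner_mono u v : wt_hom u v (u * gam + v * d) corner_mono.
Proof.
move=> i j; rewrite coef2_corner_mono; case: (i =P gam) => [->|_] /=; last by rewrite eqxx.
by case: (j =P d) => [->|_] //=; rewrite eqxx.
Qed.

Lemma has_deg_corner_mono : has_deg corner_mono d.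
Proof.
rewrite /has_deg size_scale ?size_polyXn //.
by apply: (poly_neq0_coef (k := gam)); rewrite coefZ coefXn eqxx mulr1.
Qed.

Lemma has_val_corner_mono : has_val corner_mono d.
Proof.
split; first by move=> j Hj; rewrite coefZ coefXn (ltn_eqF Hj) mulr0.
rewrite coefZ coefXn eqxx mulr1.
by apply: (poly_neq0_coef (k := gam)); rewrite coefZ coefXn eqxx mulr1.
Qed.

Lemma wt_approx_corner_mono M u v : (gam + d <= M)%N ->
  (forall i j, q i j != 0 -> (i != gam) || (j != d) -> (u * gam + v * d < u * i + v * j)%N) ->
  wt_approx u v (u * gam + v * d) (trunc2 M q) corner_mono.
Proof.
move=> HM Hs i j; rewrite coef2B coef2_trunc2 coef2_corner_mono.
case: (i =P gam) => [Ei|/eqP Ei]; case: (j =P d) => [Ej|/eqP Ej] /=.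
- by subst i j; rewrite HM subrr eqxx.
all: rewrite subr0; case: ifP => _; last by rewrite eqxx.
all: by move=> Hq; apply: Hs => //; rewrite ?Ei ?Ej ?orbT.
Qed.

Lemma wt_leading_part_X M : wt_leading_part al be be 1 1 (Qit M p q 0) 'X.
Proof.
split; first by rewrite /wt_approx subrr; apply: wt_ge0.
- move=> i j; rewrite coef2X; case: (i =P 0%N) => [->|_] /=; last by rewrite eqxx.
  by case: (j =P 1%N) => [->|_]; rewrite ?eqxx // muln0 muln1.
- by rewrite /has_deg size_polyX.
- by split; [case=> // _; rewrite coefX | rewrite coefX eqxx oner_eq0].
Qed.

(* Weights proportional to [(al, be)]: the edge polynomial stays the leading part. *)
Lemma edge_step M n T B E : (C + d <= M)%N -> (delta <= M)%N -> (0 < T)%N -> (0 < B)%N ->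
  wt_leading_part al be (be * delta ^ n) T B (Qit M p q n) E ->
  exists E', wt_leading_part al be (cc * delta ^ n) (d * T) (B * D) (Qit M p q n.+1) E'.
Proof.
move=> HM1 HM3 HT HB HE.
have [a0 Ha0 HA] := pit_leading_part delta_gt0 p_low p_lead be n al_gt0 HM3.
have HV : (0 < delta ^ n)%N by rewrite expn_gt0 delta_gt0.
have W1 := wt_ge_scale HV (wt_approx_edge_poly HM1).
have W2 := wt_hom_scale (delta ^ n) wt_hom_edge_poly.
eexists; apply: (leading_part_subst HE HT HA Ha0 HV W1 W2 has_deg_edge_poly has_val_edge_poly).
by rewrite HB.
Qed.

Lemma leading_part_Q1 M : (C + d <= M)%N -> (delta <= M)%N ->
  exists E, wt_leading_part al be cc d D (Qit M p q 1) E.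
Proof.
move=> HM1 HM3; have := @edge_step M 0 1 1 'X HM1 HM3 isT isT.
by rewrite !expn0 !muln1 mul1n; apply; apply: wt_leading_part_X.
Qed.

(** When [T_1 < delta]: only the first vertex contributes from [Q^2] on. *)

(* The weight of the leading part [q_(gam,d) (a z^(delta^(n-1)))^gam E^d] of [Q^n],
   where [E] is that of [Q^(n-1)]. *)
Fixpoint lead_wt n := if n is n'.+1 then (al * gam * delta ^ n' + d * lead_wt n')%N else be.

Lemma lead_wt_gt0 n : (0 < lead_wt n)%N.
Proof.
elim: n => [|n IH] /=; first exact: be_gt0.
by apply: leq_trans (leq_addl _ _); rewrite muln_gt0 IH andbT (leq_ltn_trans _ D_lt_d).
Qed.

Lemma lead_wtE n :
  lead_wt n = ((d - D) * gamma_n gam delta d n + (C - gam) * d ^ n)%N.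
Proof.
elim: n => [|n IH] /=; first by rewrite gamma_n0 muln0 expn0 muln1.
by rewrite IH gamma_nS expnS; nia.
Qed.

(* For weights [(al V, v)] with [v < be V] the line through [(gam, d)] is
   steeper than the first edge, so it meets [N(q)] only at [(gam, d)]. *)
Lemma corner_strict_min V v i j : (0 < V)%N -> (0 < v)%N -> (v < be * V)%N -> q i j != 0 ->
  (i != gam) || (j != d) -> (al * V * gam + v * d < al * V * i + v * j)%N.
Proof.
move=> HV Hv HvV Hq Hne; have Hg := q_left Hq; have H2 := q_above_edge Hq.
case: (leqP d j) => Hdj.
  case: (ltnP gam i) => Hgi.
    have : (al * V * gam < al * V * i)%N by rewrite ltn_pmul2l // muln_gt0 al_gt0 HV.
    by have := leq_mul (leqnn v) Hdj; lia.
  have Eg : i = gam by apply/eqP; rewrite eqn_leq Hgi Hg.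
  subst i; move: Hne; rewrite eqxx /= => Hjd.
  have Hdj' : (d < j)%N by rewrite ltn_neqAle eq_sym Hjd Hdj.
  by have := ltn_pmul2l Hv; move=> /(_ d j); rewrite Hdj' => H; lia.
have H3 := leq_mul H2 (leqnn V).
have H4 : (v * (d - j) < be * V * (d - j))%N by rewrite ltn_pmul2r // subn_gt0.
nia.
Qed.

Section CaseBelow.
Hypothesis cc_lt : (cc < be * delta)%N.

Lemma lead_wt_lt n : (0 < n)%N -> (lead_wt n < be * delta ^ n)%N.
Proof.
have Hle m : (lead_wt m <= be * delta ^ m)%N /\ ((0 < m)%N -> (lead_wt m < be * delta ^ m)%N).
  elim: m => [|m [IH _]] /=; first by rewrite expn0 muln1.
  have HV : (0 < delta ^ m)%N by rewrite expn_gt0 delta_gt0.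
  have H1 : (al * gam * delta ^ m + d * lead_wt m <= cc * delta ^ m)%N.
    by have := leq_mul (leqnn d) IH; nia.
  have H2 : (cc * delta ^ m < be * delta ^ m.+1)%N by rewrite expnS mulnA ltn_pmul2r.
  by split=> [|_]; [apply: ltnW | ]; apply: leq_ltn_trans H1 H2.
exact: (Hle n).2.
Qed.

Lemma corner_step M n T B E : (gam + d <= M)%N -> (delta <= M)%N -> (0 < T)%N ->
  wt_leading_part al be (lead_wt n.+1) T B (Qit M p q n.+1) E ->
  exists E', wt_leading_part al be (lead_wt n.+2) (d * T) (B * d) (Qit M p q n.+2) E'.
Proof.
move=> HM2 HM3 HT HE.
have [a0 Ha0 HA] := pit_leading_part delta_gt0 p_low p_lead be n.+1 al_gt0 HM3.
have HV : (0 < delta ^ n.+1)%N by rewrite expn_gt0 delta_gt0.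
have Ew : lead_wt n.+2 = (al * delta ^ n.+1 * gam + lead_wt n.+1 * d)%N.
  by rewrite /= mulnAC (mulnC d).
have W1 : wt_approx (al * delta ^ n.+1) (lead_wt n.+1) (lead_wt n.+2) (trunc2 M q) corner_mono.
  rewrite Ew; apply: wt_approx_corner_mono => // i j Hq Hne; apply: corner_strict_min => //.
    exact: lead_wt_gt0.
  exact: lead_wt_lt.
have W2 : wt_hom (al * delta ^ n.+1) (lead_wt n.+1) (lead_wt n.+2) corner_mono.
  by rewrite Ew; apply: wt_hom_corner_mono.
eexists; apply: (leading_part_subst HE HT HA Ha0 HV W1 W2 has_deg_corner_mono has_val_corner_mono).
by rewrite has_deg_corner_mono leqnn orbT.
Qed.

Lemma leading_part_corner M n : (C + d <= M)%N -> (gam + d <= M)%N -> (delta <= M)%N -> (0 < n)%N ->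
  exists E, wt_leading_part al be (lead_wt n) (d ^ n) (D * d ^ n.-1) (Qit M p q n) E.
Proof.
move=> HM1 HM2 HM3; elim: n => [//|[|n] IH] _.
  by rewrite [lead_wt 1]/= !expn0 !muln1 (mulnC d) expn1; apply: leading_part_Q1.
have [E HE] := IH isT.
have [|E' HE'] := corner_step HM2 HM3 _ HE; first by rewrite expn_gt0 (leq_ltn_trans _ D_lt_d).
by exists E'; move: HE'; rewrite -expnS -mulnA -expnSr.
Qed.

End CaseBelow.

(** When [T_1 = delta]: the weights [(al, be)] are preserved by the iteration. *)

Section CaseOn.
Hypothesis cc_eq : cc = (be * delta)%N.
Hypothesis D_gt0 : (0 < D)%N.

Lemma lead_wt_on n : lead_wt n = (be * delta ^ n)%N.
Proof.
elim: n => [|n IH] /=; first by rewrite expn0 muln1.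
have := congr1 (fun x => x * delta ^ n)%N cc_eq; rewrite /= IH expnS; nia.
Qed.

Lemma leading_part_edge M n : (C + d <= M)%N -> (delta <= M)%N ->
  exists E, wt_leading_part al be (be * delta ^ n) (d ^ n) (D ^ n) (Qit M p q n) E.
Proof.
move=> HM1 HM3; elim: n => [|n [E HE]].
  by exists 'X; rewrite !expn0 muln1; apply: wt_leading_part_X.
have HT : (0 < d ^ n)%N by rewrite expn_gt0 (leq_ltn_trans _ D_lt_d).
have HB : (0 < D ^ n)%N by rewrite expn_gt0 D_gt0.
have [E' HE'] := edge_step HM1 HM3 HT HB HE.
by exists E'; move: HE'; rewrite cc_eq -mulnA -!expnS -expnSr.
Qed.

End CaseOn.

Lemma coef2_on_edge_neq0 (Q E : P2) c x y : wt_approx al be c Q E -> wt_hom al be c E ->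
  E`_y != 0 -> (al * x + be * y)%N = c -> coef2 Q x y != 0.
Proof.
move=> HQ HE Hy HL.
set x' := (size E`_y).-1.
have Hx' : coef2 E x' y != 0 by rewrite /coef2 /x' -/(lead_coef _) lead_coef_eq0.
have := HE _ _ Hx'; rewrite -HL => /eqP; rewrite eqn_add2r eqn_pmul2l // => /eqP Ex.
by rewrite (wt_approx_coef HQ HL) -Ex.
Qed.

(* Quantifying over [M] is needed: [Qn] reads the coefficient of [z^i w^j]
   off the truncation at degree [i + j]. *)
Lemma Qn_edge_structure n c T B M0 :
  (forall M, (M0 <= M)%N -> exists E, wt_leading_part al be c T B (Qit M p q n) E) ->
  [/\ forall i j, Qn p q n i j != 0 -> (c <= al * i + be * j)%N /\
        ((al * i + be * j)%N = c -> (B <= j <= T)%N),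
      forall x, (al * x + be * T)%N = c -> Qn p q n x T != 0
    & exists2 x, (al * x + be * B)%N = c & Qn p q n x B != 0].
Proof.
move=> Hinv.
have HQn i j : Qn p q n i j = coef2 (Qit (maxn (i + j) M0) p q n) i j.
  by apply: Qn_coef2_Qit; [exact: p0 | exact: q00 | exact: leq_maxl].
split.
- move=> i j; rewrite HQn.
  have [E [H1 H2 H3 [H4 _]]] := Hinv _ (leq_maxr (i + j) M0).
  move=> Hc; split; first exact: (wt_approx_ge H1 (wt_hom_ge H2)).
  move=> HL; rewrite (wt_approx_coef H1 HL) in Hc.
  have HEj : E`_j != 0 by apply: contraNneq Hc => Hj; rewrite /coef2 Hj coef0.
  apply/andP; split.
    by rewrite leqNgt; apply: contra HEj => /H4 ->.
  by rewrite -ltnS -H3; apply: contraNT HEj; rewrite -leqNgt => Hs; rewrite nth_default.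
- move=> x HL; rewrite HQn.
  have [E [H1 H2 H3 _]] := Hinv _ (leq_maxr (x + T) M0).
  exact: coef2_on_edge_neq0 H1 H2 (has_deg_lead_coef H3) HL.
have [E [_ H2 _ [_ H5]]] := Hinv _ (leqnn M0).
set x := (size E`_B).-1.
have Hx : coef2 E x B != 0 by rewrite /coef2 /x -/(lead_coef _) lead_coef_eq0.
exists x; first exact: H2.
rewrite HQn; have [E' [H1' H2' _ [_ H5']]] := Hinv _ (leq_maxr (x + B) M0).
exact: coef2_on_edge_neq0 H1' H2' H5' (H2 _ _ Hx).
Qed.

Section Vertices.
Variable R : realType.
Local Notation deg_bound := (C + d + gam + delta)%N.

Let alR : (al%:R : R) = d%:R - D%:R. Proof. by rewrite natrB // ltnW. Qed.
Let beR : (be%:R : R) = C%:R - gam%:R. Proof. by rewrite natrB // ltnW. Qed.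

Lemma Qn_next_vertex n c T B x1 M0 :
  (forall M, (M0 <= M)%N -> exists E, wt_leading_part al be c T B (Qit M p q n) E) ->
  (al * x1 + be * T)%N = c -> (B < T)%N ->
  exists2 x2, (al * x2 + be * B)%N = c &
  [/\ next_vertex (Qn p q n) (x1%:R : R, T%:R : R) (x2%:R, B%:R),
      slope (x1%:R : R) T%:R x2%:R B%:R = - ((C%:R - gam%:R) / (d%:R - D%:R))^-1
    & be%:R * y_intercept (x1%:R : R) T%:R x2%:R B%:R = c%:R].
Proof.
move=> Hinv Hx1 HBT.
have [Hs Ht [x2 Hx2 Hg2]] := Qn_edge_structure Hinv.
exists x2 => //.
have [NV SL YI] := next_vertex_weighted_edge R al_gt0 be_gt0 Hs Hx1 Hx2 (Ht _ Hx1) Hg2 HBT.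
by split=> //; rewrite SL -alR -beR invf_div.
Qed.

Lemma iterate_vertex_below : (cc < be * delta)%N -> forall n, (1 <= n)%N ->
  let gn : R := (gamma_n gam delta d n)%:R in
  let dn : R := (d ^ n)%N%:R in
  let Cn : R := gn - (gam%:R - C%:R) * (d ^ n.-1)%N%:R in
  let Dn : R := (D * d ^ n.-1)%N%:R in
  next_vertex (Qn p q n) (gn, dn) (Cn, Dn) /\
  slope gn dn Cn Dn = - ((C%:R - gam%:R) / (d%:R - D%:R))^-1 /\
  y_intercept gn dn Cn Dn < (delta ^ n)%N%:R.
Proof.
move=> Hlt [//|m] _ gn dn Cn Dn.
have Hinv M : (deg_bound <= M)%N ->
    exists E, wt_leading_part al be (lead_wt m.+1) (d ^ m.+1) (D * d ^ m) (Qit M p q m.+1) E.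
  by move=> HM; apply: leading_part_corner => //; lia.
have HBT : (D * d ^ m < d ^ m.+1)%N.
  by rewrite expnS ltn_pmul2r // expn_gt0 (leq_ltn_trans _ D_lt_d).
have [x2 Hx2 [NV SL YI]] := Qn_next_vertex Hinv (esym (lead_wtE m.+1)) HBT.
have ECn : Cn = x2%:R.
  apply: (mulfI (x := al%:R)); first by rewrite pnatr_eq0 -lt0n.
  apply: (addIr ((be * (D * d ^ m))%N%:R)).
  rewrite -natrM -natrD Hx2 lead_wtE /Cn /gn natrD !natrM expnS !natrM alR beR.
  by ring.
rewrite /Dn ECn; split=> //; split=> //.
by rewrite -(ltr_pM2l (x := be%:R)) ?ltr0n // YI -natrM ltr_nat lead_wt_lt.
Qed.

Lemma iterate_vertex_on : cc = (be * delta)%N -> (0 < D)%N -> forall n, (1 <= n)%N ->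
  let gn : R := (gamma_n gam delta d n)%:R in
  let dn : R := (d ^ n)%N%:R in
  let Cs : R := ((\sum_(k < n) delta ^ (n.-1 - k) * D ^ k) * C)%N%:R in
  let Ds : R := (D ^ n)%N%:R in
  next_vertex (Qn p q n) (gn, dn) (Cs, Ds) /\
  slope gn dn Cs Ds = - ((C%:R - gam%:R) / (d%:R - D%:R))^-1 /\
  y_intercept gn dn Cs Ds = (delta ^ n)%N%:R.
Proof.
move=> Heq HD n Hn gn dn Cs Ds.
have Hinv M : (deg_bound <= M)%N ->
    exists E, wt_leading_part al be (be * delta ^ n) (d ^ n) (D ^ n) (Qit M p q n) E.
  by move=> HM; apply: leading_part_edge => //; lia.
have Hx1 : (al * gamma_n gam delta d n + be * d ^ n)%N = (be * delta ^ n)%N.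
  by rewrite -lead_wtE lead_wt_on.
have HBT : (D ^ n < d ^ n)%N by rewrite ltn_exp2r.
have [x2 Hx2 [NV SL YI]] := Qn_next_vertex Hinv Hx1 HBT.
have Ex2 : x2 = (gamma_n 1 delta D n * C)%N.
  have := @gamma_n_geometric (al * C) be delta D n.
  rewrite (edge_weight_eq (ltnW gam_lt_C) (ltnW D_lt_d)) Heq -Hx2 => /(_ erefl) H.
  by apply/eqP; rewrite -(eqn_pmul2l al_gt0) -(addIn H) mulnAC mulnA.
have -> : Cs = x2%:R by rewrite Ex2 /Cs /gamma_n mul1n.
split=> //; split=> //.
by apply: (mulfI (x := be%:R)); rewrite ?pnatr_eq0 -?lt0n // YI natrM.
Qed.

End Vertices.

End FirstEdgeIterates.

Lemma first_edge_y_intercept (R : realType) (gam d C D : nat) : (gam < C)%N -> (D <= d)%N ->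
  (C - gam)%:R * y_intercept (gam%:R : R) d%:R C%:R D%:R = ((d - D) * gam + (C - gam) * d)%N%:R.
Proof.
move=> HgC HDd; have Hne : (C%:R - gam%:R : R) != 0 by rewrite subr_eq0 eqr_nat gtn_eqF.
by rewrite /y_intercept natrD !natrM !natrB ?(ltnW HgC) //; field.
Qed.

Unset Implicit Arguments.

Theorem proposition5 (R : realType)
  (p : nat -> R[i]) (q : nat -> nat -> R[i]) (delta : nat)
  (Hdelta : (1 <= delta)%N)
  (Hp_low : forall i, (i < delta)%N -> p i = 0)
  (Hp_lead : p delta != 0)
  (Hp_conv : convergent1 p)
  (Hq00 : q 0%N 0%N = 0)
  (Hq_nz : exists i j, q i j != 0)
  (Hq_conv : convergent2 q)
  (gamma d C D : nat)
  (Hfirst_v : is_vertex (R := R) q (gamma%:R, d%:R))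
  (Hfirst : forall u : R * R, is_vertex q u -> gamma%:R <= u.1)
  (Hsecond : next_vertex (R := R) q (gamma%:R, d%:R) (C%:R, D%:R))
  (Hcase3 : y_intercept (gamma%:R : R) d%:R C%:R D%:R <= delta%:R) :
  let T1 : R := y_intercept gamma%:R d%:R C%:R D%:R in
  let l2 : R := (C%:R - gamma%:R) / (d%:R - D%:R) in
  (T1 < delta%:R ->
   forall n : nat, (1 <= n)%N ->
     let gn : R := (gamma_n gamma delta d n)%:R in
     let dn : R := (d ^ n)%N%:R in
     let Cn : R := gn - (gamma%:R - C%:R) * (d ^ n.-1)%N%:R in
     let Dn : R := (D * d ^ n.-1)%N%:R in
     next_vertex (Qn p q n) (gn, dn) (Cn, Dn) /\
     slope gn dn Cn Dn = - l2^-1 /\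
     y_intercept gn dn Cn Dn < (delta ^ n)%N%:R) /\
  (T1 = delta%:R -> (0 < D)%N ->
   forall n : nat, (1 <= n)%N ->
     let gn : R := (gamma_n gamma delta d n)%:R in
     let dn : R := (d ^ n)%N%:R in
     let Cs : R := ((\sum_(k < n) delta ^ (n.-1 - k) * D ^ k) * C)%N%:R in
     let Ds : R := (D ^ n)%N%:R in
     next_vertex (Qn p q n) (gn, dn) (Cs, Ds) /\
     slope gn dn Cs Ds = - l2^-1 /\
     y_intercept gn dn Cs Ds = (delta ^ n)%N%:R).
Proof.
move=> T1 l2.
have [q_first q_left] := first_vertex_leftmost Hq_nz Hfirst_v Hfirst.
have gam_lt_C := first_lt_second_x Hsecond.
have D_lt_d := second_lt_first_y Hq_nz Hfirst_v Hfirst Hsecond.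
have q_above := first_edge_supports Hq_nz Hfirst_v Hfirst Hsecond.
have q_right := first_edge_right_end Hq_nz Hfirst_v Hfirst Hsecond.
have q_second := second_vertex_coef Hq_nz Hfirst_v Hfirst Hsecond.
have HT1 := first_edge_y_intercept R gam_lt_C (ltnW D_lt_d).
have be_gt0 : (0 : R) < (C - gamma)%:R by rewrite ltr0n subn_gt0.
split=> [HT | HT HD].
  apply: (iterate_vertex_below Hdelta Hp_low Hp_lead Hq00 gam_lt_C D_lt_d
    q_left q_above q_right q_first q_second R).
  by rewrite -(ltr_nat R) natrM -HT1 ltr_pM2l.
apply: (iterate_vertex_on Hdelta Hp_low Hp_lead Hq00 gam_lt_C D_lt_d
  q_left q_above q_right q_first q_second R) => //.
by apply/eqP; rewrite -(eqr_nat R) natrM -HT1 -/T1 HT.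
Qed.
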